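(* Let $p$ be a prime and let $\mathcal P$ be the set consisting of $0$, $1$, and all positive integral powers of $p$. Let $G$ be a finite $p$-group of nilpotency class $2$ and $w\in F_k$. Then there exist $t_0,t_1,\dots,t_{k-1}\in\mathcal P$ such that $w$ is $F_k(G)$-automorphic to the word $$x_1^{t_0}[x_1,x_2]^{t_1}[x_2,x_3]^{t_2}\cdots[x_{k-1},x_k]^{t_{k-1}}.$$
   Context: $F_k$ is the free group on $x_1,\dots,x_k$. For a group $G$, each $w\in F_k$ induces a word map $G^k\to G$ by evaluation; the set $F_k(G)$ of all such word maps is a group under pointwise multiplication. Two words $w_1,w_2\in F_k$ are called $F_k(G)$-automorphic if there is a group automorphism of $F_k(G)$ sending the word map of $w_1$ to the word map of $w_2$. Commutators are $[a,b]:=aba^{-1}b^{-1}$. *)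

From mathcomp Require Import all_boot all_order all_fingroup all_solvable.
Set Implicit Arguments. Unset Strict Implicit. Unset Printing Implicit Defensive.
Local Open Scope group_scope.

(* An element of the free group F_k on x_1..x_k (x_{i+1} is indexed by i : 'I_k)
   is represented by a (not necessarily reduced) word: a list of letters
   (i, false) = x_{i+1} and (i, true) = x_{i+1}^-1.  Every element of F_k is
   represented, and the induced word map only depends on the free group element. *)
Definition word (k : nat) := seq ('I_k * bool).

Section WordMaps.
Variables (gT : finGroupType) (k : nat).

Definition tuples := {ffun 'I_k -> gT}.
Definition fmap := {ffun tuples -> gT}.

Definition eval_letter (x : tuples) (l : 'I_k * bool) : gT :=
  if l.2 then (x l.1)^-1 else x l.1.

Definition eval_word (x : tuples) (w : word k) : gT :=
  foldr (fun l acc => eval_letter x l * acc) 1 w.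

Definition word_map (w : word k) : fmap := [ffun x => eval_word x w].

Definition is_word_map (f : fmap) : Prop := exists w : word k, word_map w = f.

Definition mul_fmap (f g : fmap) : fmap := [ffun x => f x * g x].

Definition is_FkG_automorphism (phi : fmap -> fmap) : Prop :=
  [/\ (forall f, is_word_map f -> is_word_map (phi f)),
      (forall f g, is_word_map f -> is_word_map g ->
          phi (mul_fmap f g) = mul_fmap (phi f) (phi g)),
      (forall f g, is_word_map f -> is_word_map g -> phi f = phi g -> f = g) &
      (forall g, is_word_map g -> exists2 f, is_word_map f & phi f = g)].

Definition FkG_automorphic (w1 w2 : word k) : Prop :=
  exists phi : fmap -> fmap,
    is_FkG_automorphism phi /\ phi (word_map w1) = word_map w2.

End WordMaps.

Definition comm_word k (i j : 'I_k) : word k :=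
  [:: (i, false); (j, false); (i, true); (j, true)].

Definition pred_ord k (i : 'I_k) : 'I_k :=
  Ordinal (leq_ltn_trans (leq_subr 1 i) (ltn_ord i)).

(* for i = 0 : x_1^{t_0};  for i >= 1 : [x_i, x_{i+1}]^{t_i}  (1-based names) *)
Definition block k (t : 'I_k -> nat) (i : 'I_k) : word k :=
  if val i == 0 then nseq (t i) (i, false)
  else flatten (nseq (t i) (comm_word (pred_ord i) i)).

Definition normal_word k (t : 'I_k -> nat) : word k :=
  flatten [seq block t i | i <- enum 'I_k].

Definition in_P (p t : nat) : Prop := t = 0%N \/ exists n : nat, t = (p ^ n)%N.

From mathcomp Require Import all_boot all_order all_fingroup all_solvable zify.
Set Implicit Arguments. Unset Strict Implicit. Unset Printing Implicit Defensive.
Local Open Scope group_scope.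

(* In a group of nilpotency class 2 commutators are central and the commutator
   map is bilinear.  Precomposing word maps with a Nielsen move on G^k
   (x_i -> x_i x_j^-1, swapping two variables, x_i -> x_i^e with e prime to p)
   is an automorphism of F_k(G).  Modulo commutators, a word in x_i, ..., x_(k-1)
   is x_i^a times a word in the later variables, so by induction on i and
   Euclid's algorithm on the exponents a move fixing x_0, ..., x_(i-1) brings it
   to x_i^g c, with c a product of commutators, and a power move makes g a power
   of p (or 0).  By bilinearity c = [x_i, y] c' with y a word in x_(i+1), ... and
   c' a product of commutators of these; reducing y at i+1 turns [x_i, y] into
   [x_i, x_(i+1)]^g', and one continues with c'. *)


Section NielsenReduction.
Variable gT : finGroupType.
Implicit Types a b d z : gT.

(* The commutator in the convention of [comm_word]; MathComp's [~ a, b] is a^-1 b^-1 a b. *)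
Definition wcomm_def a b := a * b * a^-1 * b^-1.
Fact wcomm_key : unit. Proof. exact: tt. Qed.
Definition wcomm := locked_with wcomm_key wcomm_def.

Lemma wcommE a b : wcomm a b = a * b * a^-1 * b^-1.
Proof. by rewrite /wcomm unlock. Qed.

Lemma wcomm_central_class2 :
  nil_class [set: gT] = 2 -> forall a b z, commute (wcomm a b) z.
Proof.
move=> class2 a b z; apply/commute_sym/(centerC (in_setT z)).
have /subsetP : [set: gT]^`(1) \subset 'Z([set: gT]) by rewrite -nil_class2 class2.
apply; rewrite derg1.
have -> : wcomm a b = [~ a^-1, b^-1] by rewrite wcommE /commg /conjg !invgK !mulgA.
by apply: mem_commg; rewrite inE.
Qed.

Lemma wcommgg a : wcomm a a = 1.
Proof. by rewrite wcommE mulgK mulgV. Qed.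

Lemma wcommg1 a : wcomm a 1 = 1.
Proof. by rewrite wcommE mulg1 invg1 mulg1 mulgV. Qed.

Lemma wcomm1g a : wcomm 1 a = 1.
Proof. by rewrite wcommE mul1g invg1 mulg1 mulgV. Qed.

Lemma invg_wcomm a b : (wcomm a b)^-1 = wcomm b a.
Proof. by rewrite !wcommE !invMg !invgK !mulgA. Qed.

Lemma wcommg_central a d : (forall z, commute d z) -> wcomm a d = 1.
Proof. by move=> cZ; rewrite wcommE -(cZ a) mulgK mulgV. Qed.

Lemma mulgAC_commute a b d : commute b d -> a * b * d = a * d * b.
Proof. by move=> bd; rewrite -mulgA bd mulgA. Qed.

Hypothesis wcomm_central : forall a b z, commute (wcomm a b) z.

Lemma mulgC_wcomm a b : a * b = b * a * wcomm a b.
Proof. by rewrite -wcomm_central wcommE -!mulgA mulKg mulVg mulg1. Qed.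

Lemma wcommgM a b d : wcomm a (b * d) = wcomm a b * wcomm a d.
Proof.
have conj_wcomm x : a * x * a^-1 = wcomm a x * x by rewrite wcommE mulgVK.
have -> : wcomm a (b * d) = (a * b * a^-1) * (a * d * a^-1) * (b * d)^-1.
  by rewrite wcommE !mulgA mulgVK.
rewrite !conj_wcomm invMg !mulgA mulgK.
by rewrite -(mulgA _ b) -(wcomm_central a d b) !mulgA mulgK.
Qed.

Lemma wcommMg a b d : wcomm (a * b) d = wcomm a d * wcomm b d.
Proof. by rewrite -invg_wcomm wcommgM invMg !invg_wcomm wcomm_central. Qed.

Lemma wcommgV a b : wcomm a b^-1 = (wcomm a b)^-1.
Proof. by apply: (mulgI (wcomm a b)); rewrite -wcommgM !mulgV wcommg1. Qed.

Lemma wcommVg a b : wcomm a^-1 b = (wcomm a b)^-1.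
Proof. by rewrite -invg_wcomm wcommgV invg_wcomm. Qed.

Lemma wcommgX a b n : wcomm a (b ^+ n) = wcomm a b ^+ n.
Proof. by elim: n => [|n IH]; rewrite ?wcommg1 // !expgS wcommgM IH. Qed.

Lemma wcommXg a b n : wcomm (a ^+ n) b = wcomm a b ^+ n.
Proof. by rewrite -invg_wcomm wcommgX -expgVn invg_wcomm. Qed.

Lemma commute_wcommX a b m z : commute (wcomm a b ^+ m) z.
Proof. by have := commuteX2 m 1 (wcomm_central a b z); rewrite expg1. Qed.

Lemma expgMn_class2 a b n : (a * b) ^+ n = a ^+ n * b ^+ n * wcomm b a ^+ 'C(n, 2).
Proof.
elim: n => [|n IH]; first by rewrite !expg0 !mulg1.
rewrite expgSr IH binS bin1 expgD !expgSr -!mulgA; congr (_ * _).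
rewrite commute_wcommX !mulgA (mulgC_wcomm (b ^+ n)) wcommXg.
by rewrite !(mulgAC_commute _ (commute_wcommX b a n _)).
Qed.

Variable k : nat.
Local Notation T := (tuples gT k).
Implicit Types (f u v y c : T -> gT) (m : nat).

Inductive wfun m : (T -> gT) -> Prop :=
| wfun1 : wfun m (fun _ => 1)
| wfun_var (i : 'I_k) : m <= i -> wfun m (fun x => x i)
| wfunM f g : wfun m f -> wfun m g -> wfun m (fun x => f x * g x)
| wfunV f : wfun m f -> wfun m (fun x => (f x)^-1)
| wfun_ext f g : wfun m f -> f =1 g -> wfun m g.

Inductive commfun m : (T -> gT) -> Prop :=
| commfun1 : commfun m (fun _ => 1)
| commfun_wcomm (i j : 'I_k) : m <= i -> m <= j -> commfun m (fun x => wcomm (x i) (x j))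
| commfunM f g : commfun m f -> commfun m g -> commfun m (fun x => f x * g x)
| commfunV f : commfun m f -> commfun m (fun x => (f x)^-1)
| commfun_ext f g : commfun m f -> f =1 g -> commfun m g.

Lemma wfun_le m m' f : m' <= m -> wfun m f -> wfun m' f.
Proof.
move=> le_m'm; elim=> {f} [|i|f g _ fW _ gW|f _ fW|f g _ fW fg].
- exact: wfun1.
- by move=> le_mi; apply: wfun_var; apply: leq_trans le_mi.
- exact: wfunM fW gW.
- exact: wfunV fW.
- exact: wfun_ext fW fg.
Qed.

Lemma commfun_le m m' f : m' <= m -> commfun m f -> commfun m' f.
Proof.
move=> le_m'm; elim=> {f} [|i j le_mi le_mj|f g _ fC _ gC|f _ fC|f g _ fC fg].
- exact: commfun1.
- by apply: commfun_wcomm; [apply: leq_trans le_mi|apply: leq_trans le_mj].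
- exact: commfunM fC gC.
- exact: commfunV fC.
- exact: commfun_ext fC fg.
Qed.

Lemma wfunX m f n : wfun m f -> wfun m (fun x => f x ^+ n).
Proof.
move=> fW; elim: n => [|n IH]; first by apply: wfun_ext (wfun1 m) _ => x; rewrite expg0.
by apply: wfun_ext (wfunM fW IH) _ => x; rewrite expgS.
Qed.

Lemma commfunX m f n : commfun m f -> commfun m (fun x => f x ^+ n).
Proof.
move=> fC; elim: n => [|n IH]; first by apply: commfun_ext (commfun1 m) _ => x; rewrite expg0.
by apply: commfun_ext (commfunM fC IH) _ => x; rewrite expgS.
Qed.

Lemma ord_neq_ltn (q l : 'I_k) : q <= l -> l != q -> q < l.
Proof. by move=> le_ql ne_lq; rewrite ltn_neqAle le_ql andbT eq_sym. Qed.

Lemma wfun_var_gt (q l : 'I_k) : q <= l -> l != q -> wfun q.+1 (fun x => x l).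
Proof. by move=> le_ql ne_lq; apply/wfun_var/ord_neq_ltn. Qed.

Lemma commfun_central m f : commfun m f -> forall x z, commute (f x) z.
Proof.
elim=> {f} [|i j _ _|f g _ fZ _ gZ|f _ fZ|f g _ fZ fg] x z /=.
- exact/commute_sym/commute1.
- exact: wcomm_central.
- by apply/commute_sym/commuteM; apply/commute_sym.
- exact/commute_sym/commuteV/commute_sym.
- by rewrite -fg.
Qed.

Lemma wfun_wcomm m u v : wfun m u -> wfun m v -> commfun m (fun x => wcomm (u x) (v x)).
Proof.
have wcomm_var (i : 'I_k) v' : m <= i -> wfun m v' -> commfun m (fun x => wcomm (x i) (v' x)).
  move=> le_mi; elim=> {v'} [|j|f g _ fC _ gC|f _ fC|f g _ fC fg].
  - by apply: commfun_ext (commfun1 m) _ => x; rewrite wcommg1.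
  - exact: commfun_wcomm.
  - by apply: commfun_ext (commfunM fC gC) _ => x; rewrite wcommgM.
  - by apply: commfun_ext (commfunV fC) _ => x; rewrite wcommgV.
  - by apply: commfun_ext fC _ => x; rewrite fg.
move=> uW vW; elim: uW => {u} [|j|f g _ fC _ gC|f _ fC|f g _ fC fg].
- by apply: commfun_ext (commfun1 m) _ => x; rewrite wcomm1g.
- by move=> le_mj; apply: wcomm_var.
- by apply: commfun_ext (commfunM fC gC) _ => x; rewrite wcommMg.
- by apply: commfun_ext (commfunV fC) _ => x; rewrite wcommVg.
- by apply: commfun_ext fC _ => x; rewrite fg.
Qed.

Lemma wfun_eq1 m f : k <= m -> wfun m f -> f =1 (fun _ => 1).
Proof.
move=> le_km; elim=> {f} [|i le_mi|f g _ f1 _ g1|f _ f1|f g _ f1 fg] x //.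
- by have := ltn_ord i; rewrite ltnNge (leq_trans le_km le_mi).
- by rewrite f1 g1 mulg1.
- by rewrite f1 invg1.
- by rewrite -fg f1.
Qed.

Lemma commfun_eq1 m f : k <= m.+1 -> commfun m f -> f =1 (fun _ => 1).
Proof.
move=> le_km; elim=> {f} [|i j le_mi le_mj|f g _ f1 _ g1|f _ f1|f g _ f1 fg] x //.
- suff -> : i = j by exact: wcommgg.
  by apply: val_inj => /=; have := ltn_ord i; have := ltn_ord j; lia.
- by rewrite f1 g1 mulg1.
- by rewrite f1 invg1.
- by rewrite -fg f1.
Qed.

Lemma invg_expg_card (a : gT) n : (a ^+ n)^-1 = a ^+ (n * #|gT|.-1).
Proof.
have card_gt0 : 0 < #|gT| by apply/card_gt0P; exists 1.
have expg_card : a ^+ n ^+ #|gT| = 1 by rewrite -cardsT expg_cardG ?inE.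
by rewrite expgM; apply: (mulgI (a ^+ n)); rewrite mulgV -expgS prednK.
Qed.

Lemma wfun_split (i : 'I_k) y : wfun i y ->
  exists (a : nat) (z : T -> gT) c,
    [/\ wfun i.+1 z, commfun i c & forall x, y x = x i ^+ a * z x * c x].
Proof.
have xiW : wfun i (fun x => x i) by exact: wfun_var.
elim=> {y} [|j le_ij|f g _ [a [z [c [zW cC ef]]]] _ [b [z' [c' [z'W c'C eg]]]]
           |f _ [a [z [c [zW cC ef]]]]|f g _ [a [z [c [zW cC ef]]]] fg].
- exists 0, (fun _ => 1), (fun _ => 1); split; [exact: wfun1|exact: commfun1|].
  by move=> x; rewrite expg0 !mulg1.
- have [->|ne_ji] := eqVneq j i.
    exists 1%N, (fun _ => 1), (fun _ => 1); split; [exact: wfun1|exact: commfun1|].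
    by move=> x; rewrite expg1 !mulg1.
  exists 0, (fun x => x j), (fun _ => 1); split; [exact: wfun_var_gt|exact: commfun1|].
  by move=> x; rewrite expg0 mul1g mulg1.
- exists (a + b), (fun x => z x * z' x),
    (fun x => wcomm (z x) (x i ^+ b) * c x * c' x); split; first exact: wfunM.
    by do 2?apply: commfunM => //; apply: wfun_wcomm (wfun_le _ zW) (wfunX _ xiW).
  move=> x; rewrite ef eg expgD !mulgA.
  rewrite !(mulgAC_commute _ (commfun_central cC x _)).
  rewrite -(mulgA (x i ^+ a)) (mulgC_wcomm (z x)) !mulgA.
  by rewrite (mulgAC_commute _ (wcomm_central _ _ _)).
- have ziW : wfun i (fun x => (z x)^-1) by apply/wfunV/(wfun_le _ zW).
  exists (a * #|gT|.-1)%N, (fun x => (z x)^-1),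
    (fun x => wcomm ((z x)^-1) (x i ^+ (a * #|gT|.-1)%N) * (c x)^-1); split.
  + exact: wfunV.
  + by apply: commfunM; [apply: wfun_wcomm ziW (wfunX _ xiW)|apply: commfunV].
  move=> x; rewrite ef !invMg -invg_expg_card (mulgC_wcomm (z x)^-1).
  have cVZ z0 : commute (c x)^-1 z0.
    exact/commute_sym/commuteV/commute_sym/(commfun_central cC).
  by rewrite mulgA cVZ -!mulgA cVZ.
- by exists a, z, c; split => // x; rewrite -fg.
Qed.

Lemma commfun_split (q : 'I_k) f : commfun q f ->
  exists y c, [/\ wfun q.+1 y, commfun q.+1 c & forall x, f x = wcomm (x q) (y x) * c x].
Proof.
elim=> {f} [|i j le_qi le_qj|f g _ [y [c [yW cC ef]]] _ [y' [c' [y'W c'C eg]]]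
           |f _ [y [c [yW cC ef]]]|f g _ [y [c [yW cC ef]]] fg].
- exists (fun _ => 1), (fun _ => 1); split; [exact: wfun1|exact: commfun1|].
  by move=> x; rewrite wcommg1 mulg1.
- have [->|ne_iq] := eqVneq i q; have [->|ne_jq] := eqVneq j q.
  + exists (fun _ => 1), (fun _ => 1); split; [exact: wfun1|exact: commfun1|].
    by move=> x; rewrite wcommg1 wcommgg mulg1.
  + exists (fun x => x j), (fun _ => 1); split; [exact: wfun_var_gt|exact: commfun1|].
    by move=> x; rewrite mulg1.
  + exists (fun x => (x i)^-1), (fun _ => 1); split; [|exact: commfun1|].
      exact/wfunV/wfun_var_gt.
    by move=> x; rewrite mulg1 wcommgV invg_wcomm.
  + exists (fun _ => 1), (fun x => wcomm (x i) (x j)); split; [exact: wfun1| |].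
      exact: commfun_wcomm (ord_neq_ltn le_qi ne_iq) (ord_neq_ltn le_qj ne_jq).
    by move=> x; rewrite wcommg1 mul1g.
- exists (fun x => y x * y' x), (fun x => c x * c' x); split; [exact: wfunM|exact: commfunM|].
  move=> x; rewrite ef eg wcommgM !mulgA; congr (_ * _).
  by rewrite -!mulgA; congr (_ * _); rewrite wcomm_central.
- exists (fun x => (y x)^-1), (fun x => (c x)^-1); split; [exact: wfunV|exact: commfunV|].
  move=> x; rewrite ef invMg wcommgV.
  exact/commute_sym/commuteV/commute_sym/(commfun_central cC).
- by exists y, c; split => // x; rewrite -fg.
Qed.

Definition fixes_below m (U : T -> T) := forall x (l : 'I_k), l < m -> U x l = x l.

Definition wfun_coords m (U : T -> T) := forall l : 'I_k, m <= l -> wfun m (fun x => U x l).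

(* U is the action on G^k of an automorphism of F_k that fixes x_0, ..., x_(m-1)
   and maps <x_m, ..., x_(k-1)> onto itself; V is the action of its inverse. *)
Record nielsen m (U V : T -> T) : Prop := Nielsen {
  nielsenK : cancel U V;
  nielsenVK : cancel V U;
  nielsen_fix : fixes_below m U;
  nielsenV_fix : fixes_below m V;
  nielsen_coords : wfun_coords m U;
  nielsenV_coords : wfun_coords m V }.

Lemma wfun_comp m U f : wfun_coords m U -> wfun m f -> wfun m (fun x => f (U x)).
Proof.
move=> UW; elim=> {f} [|i|f g _ fW _ gW|f _ fW|f g _ fW fg].
- exact: wfun1.
- exact: UW.
- exact: wfunM fW gW.
- exact: wfunV fW.
- by apply: wfun_ext fW _ => x; rewrite fg.
Qed.

Lemma commfun_comp m U f : wfun_coords m U -> commfun m f -> commfun m (fun x => f (U x)).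
Proof.
move=> UW; elim=> {f} [|i j le_mi le_mj|f g _ fC _ gC|f _ fC|f g _ fC fg].
- exact: commfun1.
- exact: wfun_wcomm (UW i le_mi) (UW j le_mj).
- exact: commfunM fC gC.
- exact: commfunV fC.
- by apply: commfun_ext fC _ => x; rewrite fg.
Qed.

Lemma nielsen_id m : nielsen m id id.
Proof. by split=> // l le_ml; apply: wfun_var. Qed.

Lemma nielsen_comp m U1 V1 U2 V2 : nielsen m U1 V1 -> nielsen m U2 V2 ->
  nielsen m (fun x => U1 (U2 x)) (fun x => V2 (V1 x)).
Proof.
case=> K1 K1' f1 f1' W1 W1' [K2 K2' f2 f2' W2 W2']; split.
- by move=> x; rewrite K1 K2.
- by move=> x; rewrite K2' K1'.
- by move=> x l lt_lm; rewrite f1 // f2.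
- by move=> x l lt_lm; rewrite f2' // f1'.
- by move=> l le_ml; apply: wfun_comp W2 (W1 l le_ml).
- by move=> l le_ml; apply: wfun_comp W1' (W2' l le_ml).
Qed.

Lemma nielsen_le m m' U V : m' <= m -> nielsen m U V -> nielsen m' U V.
Proof.
move=> le_m'm [K K' f f' W W']; split=> // [x l lt_lm'|x l lt_lm'|l le_m'l|l le_m'l].
- exact/f/(leq_trans lt_lm').
- exact/f'/(leq_trans lt_lm').
- have [lt_lm|le_ml] := ltnP l m; last exact: wfun_le le_m'm (W l le_ml).
  by apply: wfun_ext (wfun_var le_m'l) _ => x; rewrite f.
- have [lt_lm|le_ml] := ltnP l m; last exact: wfun_le le_m'm (W' l le_ml).
  by apply: wfun_ext (wfun_var le_m'l) _ => x; rewrite f'.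
Qed.

Definition upd (i : 'I_k) (F : T -> gT) (x : T) : T :=
  [ffun l => if l == i then F x else x l].

Lemma upd_at i F x : upd i F x i = F x.
Proof. by rewrite ffunE eqxx. Qed.

Lemma upd_ne i F x l : l != i -> upd i F x l = x l.
Proof. by rewrite ffunE => /negPf->. Qed.

Lemma nielsen_upd m (i : 'I_k) F F' : m <= i -> wfun m F -> wfun m F' ->
  (forall x, F' (upd i F x) = x i) -> (forall x, F (upd i F' x) = x i) ->
  nielsen m (upd i F) (upd i F').
Proof.
move=> le_mi FW F'W FK F'K.
have upd_cancel G G' : (forall x, G' (upd i G x) = x i) -> cancel (upd i G) (upd i G').
  move=> GK x; apply/ffunP => l; have [->|ne_li] := eqVneq l i; first by rewrite upd_at.
  by rewrite !upd_ne.
have upd_fix G : fixes_below m (upd i G).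
  by move=> x l lt_lm; rewrite upd_ne //; apply: contraTneq lt_lm => ->; rewrite -leqNgt.
have upd_coords G : wfun m G -> wfun_coords m (upd i G).
  move=> GW l le_ml; have [->|ne_li] := eqVneq l i.
    by apply: wfun_ext GW _ => x; rewrite upd_at.
  by apply: wfun_ext (wfun_var le_ml) _ => x; rewrite upd_ne.
by split; [apply: upd_cancel|apply: upd_cancel|apply: upd_fix|apply: upd_fix
          |apply: upd_coords|apply: upd_coords].
Qed.

Definition transv (i j : 'I_k) := upd i (fun x => x i * (x j)^-1).

Lemma nielsen_transv m (i j : 'I_k) : i != j -> m <= i -> m <= j ->
  nielsen m (transv i j) (upd i (fun x => x i * x j)).
Proof.
move=> ne_ij le_mi le_mj; have ne_ji : j != i by rewrite eq_sym.
apply: nielsen_upd => // [||x|x]; rewrite ?upd_at ?upd_ne ?mulgKV ?mulgK //.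
  by apply: wfunM; [apply: wfun_var|apply/wfunV/wfun_var].
by apply: wfunM; apply: wfun_var.
Qed.

Lemma nielsen_expg m (i : 'I_k) e e' : m <= i ->
  (forall a : gT, a ^+ e ^+ e' = a) -> (forall a : gT, a ^+ e' ^+ e = a) ->
  nielsen m (upd i (fun x => x i ^+ e)) (upd i (fun x => x i ^+ e')).
Proof.
move=> le_mi eK e'K.
by apply: nielsen_upd => // [||x|x]; rewrite ?upd_at //; apply/wfunX/wfun_var.
Qed.

Definition swapv (i j : 'I_k) (x : T) : T := [ffun l => x (tperm i j l)].

Lemma nielsen_swap m (i j : 'I_k) : m <= i -> m <= j -> nielsen m (swapv i j) (swapv i j).
Proof.
move=> le_mi le_mj.
have swapK : cancel (swapv i j) (swapv i j).
  by move=> x; apply/ffunP => l; rewrite !ffunE tpermK.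
have swap_fix : fixes_below m (swapv i j).
  move=> x l lt_lm; rewrite ffunE tpermD //.
    by apply: contraTneq lt_lm => <-; rewrite -leqNgt.
  by apply: contraTneq lt_lm => <-; rewrite -leqNgt.
have swap_coords : wfun_coords m (swapv i j).
  move=> l le_ml; apply: wfun_ext (wfun_var (_ : m <= tperm i j l)) _.
    by case: tpermP.
  by move=> x; rewrite ffunE.
by split.
Qed.

Definition reduces (i : 'I_k) y g := exists U V c,
  [/\ nielsen i U V, commfun i c & forall x, y (U x) = x i ^+ g * c x].

Lemma reduces_base (i : 'I_k) y g c :
  commfun i c -> (forall x, y x = x i ^+ g * c x) -> reduces i y g.
Proof. by move=> cC ey; exists id, id, c; split=> //; apply: nielsen_id. Qed.

Lemma reduces_nielsen (i : 'I_k) U V c y y' g : nielsen i U V -> commfun i c ->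
  (forall x, y (U x) = y' x * c x) -> reduces i y' g -> reduces i y g.
Proof.
move=> nUV cC eyU [U' [V' [c' [nUV' c'C ey'U']]]].
exists (fun x => U (U' x)), (fun x => V' (V x)), (fun x => c' x * c (U' x)); split.
- exact: nielsen_comp nUV nUV'.
- exact: commfunM c'C (commfun_comp (nielsen_coords nUV') cC).
by move=> x; rewrite eyU ey'U' mulgA.
Qed.

Lemma expgVK (a : gT) n1 n2 : n1 <= n2 -> (a^-1) ^+ n1 * a ^+ n2 = a ^+ (n2 - n1).
Proof. by move=> le_n; rewrite -{1}(subnKC le_n) expgD expVgn mulKg. Qed.

Lemma expgKV (a : gT) n1 n2 : n2 <= n1 -> a ^+ n1 * (a^-1) ^+ n2 = a ^+ (n1 - n2).
Proof. by move=> le_n; rewrite -{1}(subnK le_n) expgD expVgn mulgK. Qed.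

(* Euclid's algorithm on the exponents, run by transvections between x_i and x_j. *)
Lemma reduces_pair (i j : 'I_k) (a b : nat) : i < j ->
  exists g, reduces i (fun x => x i ^+ a * x j ^+ b) g.
Proof.
move=> lt_ij; have ne_ij : i != j by rewrite neq_ltn lt_ij.
have le_ij := ltnW lt_ij; have ne_ji : j != i by rewrite eq_sym.
have [xiW xjW] : wfun i (fun x => x i) /\ wfun i (fun x => x j) by split; apply: wfun_var.
have [n] := ubnP (a + b); elim: n a b => // n IH a b lt_ab_n.
have [-> | b_gt0] := posnP b.
  by exists a; apply: (reduces_base (commfun1 _)) => x; rewrite expg0 !mulg1.
have [-> | a_gt0] := posnP a.
  exists b; apply: (reduces_nielsen (nielsen_swap (leqnn i) le_ij) (commfun1 _)
                     (y' := fun x => x i ^+ b)).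
    by move=> x; rewrite !ffunE tpermL tpermR expg0 mul1g mulg1.
  by apply: (reduces_base (commfun1 _)) => x; rewrite mulg1.
have [le_ab | lt_ba] := leqP a b.
  have [g red] := IH a (b - a) (ltac:(lia)); exists g.
  apply: (reduces_nielsen (nielsen_transv ne_ij (leqnn i) le_ij) _ _ red
           (c := fun x => wcomm (x j)^-1 (x i) ^+ 'C(a, 2))).
    exact/commfunX/wfun_wcomm/xiW/wfunV.
  move=> x /=; rewrite upd_at upd_ne // expgMn_class2.
  by rewrite (mulgAC_commute _ (commute_wcommX _ _ _ _)) -(mulgA (x i ^+ a)) expgVK.
have [g red] := IH (a - b) b (ltac:(lia)); exists g.
apply: (reduces_nielsen (nielsen_transv ne_ji le_ij (leqnn i)) _ _ red
         (c := fun x => wcomm (x j ^+ b) ((x i)^-1 ^+ b) * wcomm (x i)^-1 (x j) ^+ 'C(b, 2))).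
  apply: commfunM; first exact/wfun_wcomm/wfunX/wfunV/xiW/wfunX.
  exact/commfunX/wfun_wcomm/xjW/wfunV.
move=> x /=; rewrite upd_at upd_ne // expgMn_class2 (mulgC_wcomm (x j ^+ b)) !mulgA.
by rewrite expgKV 1?ltnW.
Qed.

Lemma wfun_reduces (i : 'I_k) y : wfun i y -> exists g, reduces i y g.
Proof.
have [n] := ubnP (k - i); elim: n i y => // n IH i y lt_n yW.
have [a [z [c [zW cC eyz]]]] := wfun_split yW.
have [lt_ik | le_ki] := ltnP i.+1 k; last first.
  by exists a; apply: (reduces_base cC) => x; rewrite eyz (wfun_eq1 le_ki zW) mulg1.
pose j := Ordinal lt_ik.
have [b [U [V [c' [nUV c'C ezU]]]]] := IH j z (ltac:(rewrite /=; lia)) zW.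
have [g red] := reduces_pair a b (ltnSn i : i < j); exists g.
have nUV_i := nielsen_le (leqnSn i) nUV.
apply: (reduces_nielsen nUV_i _ _ red (c := fun x => c' x * c (U x))).
  exact: commfunM (commfun_le (leqnSn i) c'C) (commfun_comp (nielsen_coords nUV_i) cC).
by move=> x; rewrite eyz ezU (nielsen_fix nUV) // !mulgA.
Qed.

Lemma reduces_expg_coprime (i : 'I_k) e n : coprime #|gT| e ->
  reduces i (fun x => x i ^+ (e * n)) n.
Proof.
move=> cop_e; rewrite -cardsT in cop_e.
pose e' := expg_invn [set: gT] e.
have eK (a : gT) : a ^+ e ^+ e' = a by apply: (expgK cop_e); rewrite inE.
have e'K (a : gT) : a ^+ e' ^+ e = a by rewrite expgAC eK.
apply: (reduces_nielsen (nielsen_expg (leqnn i) e'K eK) (commfun1 _)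
                        (y' := fun x => x i ^+ n)).
  by move=> x; rewrite upd_at expgM e'K mulg1.
by apply: (reduces_base (commfun1 _)) => x; rewrite mulg1.
Qed.

Lemma wfun_reduces_ppow p (i : 'I_k) y : prime p -> p.-group [set: gT] -> wfun i y ->
  exists2 t, in_P p t & reduces i y t.
Proof.
move=> p_pr pG yW; have [g [U [V [c [nUV cC eyU]]]]] := wfun_reduces yW.
have [g0 | g_gt0] := posnP g.
  by exists 0 => //; [left|exists U, V, c; split=> // x; rewrite eyU g0].
have [e cop_pe eg] := pfactor_coprime p_pr g_gt0.
exists (p ^ logn p g)%N; first by right; exists (logn p g).
apply: (reduces_nielsen nUV cC eyU); rewrite {1}eg.
by apply: reduces_expg_coprime; rewrite -cardsT (card_pgroup pG) coprimeXl.
Qed.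

(* [nblock t x l] is the value at x of the l-th factor of [normal_word], with
   indices in nat; [coord] is 1 out of range. *)
Definition coord (x : T) (l : nat) : gT := if insub l is Some o then x o else 1.

Lemma coordE x (o : 'I_k) : coord x o = x o.
Proof. by rewrite /coord valK. Qed.

Definition nblock (t : nat -> nat) (x : T) (l : nat) : gT :=
  if l == 0 then coord x l ^+ t l else wcomm (coord x l.-1) (coord x l) ^+ t l.

Definition normal_prefix t n x := \prod_(0 <= l < n) nblock t x l.

Lemma normal_prefix_fix m U t n x :
  fixes_below m U -> n <= m -> normal_prefix t n (U x) = normal_prefix t n x.
Proof.
move=> Ufix le_nm; apply: eq_big_nat => l /andP[_ lt_ln].
have coordU l' : l' < m -> coord (U x) l' = coord x l'.
  by rewrite /coord; case: insubP => // o _ <-; apply: Ufix.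
have lt_lm := leq_trans lt_ln le_nm.
by rewrite /nblock !coordU // (leq_ltn_trans (leq_pred l)).
Qed.

Lemma normal_prefix_set t n g x :
  normal_prefix (fun l => if l == n.+1 then g else t l) n.+2 x =
  normal_prefix t n.+1 x * wcomm (coord x n) (coord x n.+1) ^+ g.
Proof.
rewrite /normal_prefix big_nat_recr //=; congr (_ * _); last by rewrite /nblock /= eqxx.
by apply: eq_big_nat => l /andP[_ lt_ln]; rewrite /nblock (ltn_eqF lt_ln).
Qed.

Definition nielsen_equiv f g := exists U V, nielsen 0 U V /\ forall x, g x = f (U x).

Lemma nielsen_equiv_trans f g h :
  nielsen_equiv f g -> nielsen_equiv g h -> nielsen_equiv f h.
Proof.
move=> [U1 [V1 [nUV1 eg]]] [U2 [V2 [nUV2 eh]]].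
exists (fun x => U1 (U2 x)), (fun x => V2 (V1 x)).
by split=> [|x]; [apply: nielsen_comp|rewrite eh eg].
Qed.

Lemma nielsen_equiv_ext f g g' : nielsen_equiv f g -> g =1 g' -> nielsen_equiv f g'.
Proof. by move=> [U [V [nUV eg]]] gg'; exists U, V; split=> // x; rewrite -gg' eg. Qed.

Lemma nielsen_equiv_comp m f U V : nielsen m U V -> nielsen_equiv f (fun x => f (U x)).
Proof. by move=> nUV; exists U, V; split=> //; apply: nielsen_le nUV. Qed.

Lemma normal_form_from p f (q : 'I_k) t c : prime p -> p.-group [set: gT] ->
  (forall l, in_P p (t l)) -> commfun q c ->
  nielsen_equiv f (fun x => normal_prefix t q.+1 x * c x) ->
  exists2 t', (forall l, in_P p (t' l)) & nielsen_equiv f (normal_prefix t' k).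
Proof.
move=> p_pr pG; have [n] := ubnP (k - q); elim: n q t c => // n IH q t c lt_n tP cC eqv.
have [lt_qk | le_kq] := ltnP q.+1 k; last first.
  exists t => //; apply: nielsen_equiv_ext eqv _ => x.
  rewrite (commfun_eq1 le_kq cC) mulg1; congr (normal_prefix t _ x).
  by apply/eqP; rewrite eqn_leq le_kq ltn_ord.
pose j := Ordinal lt_qk.
have [y [c' [yW c'C ec]]] := commfun_split cC.
have [g gP [U [V [c'' [nUV c''C eyU]]]]] := wfun_reduces_ppow (i := j) p_pr pG yW.
pose t' l := if l == q.+1 then g else t l.
apply: (IH j t' (fun x => c' (U x))).
- by rewrite /=; lia.
- by move=> l; rewrite /t'; case: eqP.
- exact: commfun_comp (nielsen_coords nUV) c'C.
apply: nielsen_equiv_trans eqv _; apply: nielsen_equiv_ext (nielsen_equiv_comp _ nUV) _ => x.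
rewrite (normal_prefix_fix _ _ (nielsen_fix nUV)) // ec (nielsen_fix nUV) // eyU.
rewrite wcommgM (wcommg_central _ (commfun_central c''C x)) mulg1 wcommgX.
by rewrite normal_prefix_set (coordE x q) (coordE x j) mulgA.
Qed.

Lemma eval_word_cat (x : T) (w1 w2 : word k) :
  eval_word x (w1 ++ w2) = eval_word x w1 * eval_word x w2.
Proof. by elim: w1 => [|l w IH] /=; rewrite ?mul1g // IH mulgA. Qed.

Lemma eval_word_rev_inv (x : T) (w : word k) :
  eval_word x (rev [seq (l.1, ~~ l.2) | l <- w]) = (eval_word x w)^-1.
Proof.
elim: w => [|l w IH] /=; first by rewrite invg1.
rewrite rev_cons -cats1 eval_word_cat IH /= mulg1 invMg.
by rewrite /eval_letter /=; case: l.2; rewrite ?invgK.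
Qed.

Lemma eval_word_nseq (x : T) n (l : 'I_k * bool) :
  eval_word x (nseq n l) = eval_letter x l ^+ n.
Proof. by elim: n => [|n IH] /=; rewrite ?expg0 // IH expgS. Qed.

Lemma eval_word_flatten_nseq (x : T) n (w : word k) :
  eval_word x (flatten (nseq n w)) = eval_word x w ^+ n.
Proof. by elim: n => [|n IH] /=; rewrite ?expg0 // eval_word_cat IH expgS. Qed.

Lemma wfun_eval_word (w : word k) : wfun 0 ((fun x => eval_word x w)).
Proof.
elim: w => [|[i []] w IH] /=; first exact: wfun1.
  exact/wfunM/IH/wfunV/wfun_var.
exact/wfunM/IH/wfun_var.
Qed.

Lemma wfun_word m f : wfun m f -> exists w : word k, (fun x => eval_word x w) =1 f.
Proof.
elim=> {f} [|i _|f g _ [w1 e1] _ [w2 e2]|f _ [w e]|f g _ [w e] fg].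
- by exists [::].
- by exists [:: (i, false)] => x /=; rewrite mulg1.
- by exists (w1 ++ w2) => x; rewrite eval_word_cat e1 e2.
- by exists (rev [seq (l.1, ~~ l.2) | l <- w]) => x; rewrite eval_word_rev_inv e.
- by exists w => x; rewrite e fg.
Qed.

Lemma nielsen_equiv_automorphic (w1 w2 : word k) :
  nielsen_equiv ((fun x => eval_word x w1)) ((fun x => eval_word x w2)) -> FkG_automorphic gT w1 w2.
Proof.
move=> [U [V [nUV ew]]].
have wfun_map f : wfun 0 f -> is_word_map [ffun x => f x].
  by move=> /wfun_word [w e]; exists w; apply/ffunP => x; rewrite !ffunE e.
have map_wfun (F : fmap gT k) : is_word_map F -> wfun 0 (fun x => F x).
  by move=> [w <-]; apply: wfun_ext (wfun_eval_word w) _ => x; rewrite ffunE.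
exists (fun F : fmap gT k => [ffun x => F (U x)]); split; last first.
  by apply/ffunP => x; rewrite !ffunE ew.
split.
- by move=> F /map_wfun FW; apply/wfun_map/(wfun_comp (nielsen_coords nUV)).
- by move=> F G _ _; apply/ffunP => x; rewrite !ffunE.
- move=> F G _ _ FG; apply/ffunP => x.
  by have := congr1 (fun H : fmap gT k => H (V x)) FG; rewrite /= !ffunE (nielsenVK nUV).
- move=> G /map_wfun GW; exists [ffun x => G (V x)].
    exact/wfun_map/(wfun_comp (nielsenV_coords nUV)).
  by apply/ffunP => x; rewrite !ffunE (nielsenK nUV).
Qed.

Lemma eval_normal_word (x : T) (t : nat -> nat) :
  eval_word x (normal_word (fun i : 'I_k => t i)) = normal_prefix t k x.
Proof.
set tk := fun i : 'I_k => t i.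
have eval_flatten (s : seq 'I_k) : eval_word x (flatten [seq block tk i | i <- s]) =
    \prod_(i <- s) eval_word x (block tk i).
  by elim: s => [|i s IH] /=; rewrite ?big_nil // eval_word_cat IH big_cons.
rewrite /normal_word eval_flatten enumT /normal_prefix big_mkord [index_enum _]unlock.
apply: eq_bigr => i _; rewrite /block /nblock; case: eqP => i0.
  by rewrite eval_word_nseq /eval_letter coordE.
rewrite eval_word_flatten_nseq /= /eval_letter /= !mulg1 wcommE !mulgA coordE.
by rewrite (_ : (val i).-1 = pred_ord i) ?coordE //= subn1.
Qed.

End NielsenReduction.

Theorem theorem2p7 (p : nat) (gT : finGroupType) (k : nat) (w : word k) :
  prime p -> (p.-group [set: gT])%g -> nil_class [set: gT] = 2 -> 0 < k ->
  exists t : 'I_k -> nat,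
    (forall i, in_P p (t i)) /\ FkG_automorphic gT w (normal_word t).
Proof.
move=> p_pr pG class2 k_gt0.
have cZ := wcomm_central_class2 class2.
pose i0 : 'I_k := Ordinal k_gt0.
have [g gP [U [V [c [nUV cC ewU]]]]] :=
  wfun_reduces_ppow cZ (i := i0) p_pr pG (@wfun_eval_word gT k w).
pose t l := if l == 0 then g else 0.
have tP l : in_P p (t l) by rewrite /t; case: eqP => _ //; left.
have eqv0 : nielsen_equiv (fun x => eval_word x w) (fun x => normal_prefix t i0.+1 x * c x).
  apply: nielsen_equiv_ext (nielsen_equiv_comp _ nUV) _ => x.
  by rewrite ewU /normal_prefix big_nat1 /nblock /= (coordE x i0).
have [t' t'P eqv] := normal_form_from cZ p_pr pG tP cC eqv0.
exists (fun i : 'I_k => t' i); split => //.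
by apply/nielsen_equiv_automorphic/(nielsen_equiv_ext eqv) => x; rewrite eval_normal_word.
Qed.
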